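(* There exist universal constants $C,C'>0$ such that for every $m>0$, every $\beta\in(0,1/3)$, every $\epsilon\in(0,1)$, every odd $n\in\mathbb{N}$ with $n\epsilon\ge C\ln(1/\beta)$, and every $D\in\mathcal{CTM}$, setting $\alpha^*=1/(n\epsilon)$, with probability at least $1-\beta$, $$\mathrm{FAIR}(D,\mathtt{DPExpMed}_{\alpha^*}(D))\le C'\frac{m}{n\epsilon}\ln\frac1\beta.$$
   Context: $V=[-m/2,m/2]$. A dataset is $D=(x_1,\dots,x_n)\in V^n$, indexed so that $x_1\le\dots\le x_n$, with median (optimal location) $\mathcal{T}(D)=x_{\lceil n/2\rceil}$. $\mathrm{FAIR}(D,\ell)=\max_{1\le i\le n}\left(|x_i-\ell|-|x_i-\mathcal{T}(D)|\right)$ (maximum individual utility loss when agent utilities are $-|x_i-\ell|$). $\mathcal{CTM}$ is the set of datasets with $|x_{i+1}-x_i|\ge|x_{j+1}-x_j|$ for all $1\le i<j\le\lceil n/2\rceil-1$ and $|x_i-x_{i-1}|\ge|x_j-x_{j-1}|$ for all $\lceil n/2\rceil+1\le j<i\le n$. The percentile loss $q(D,a)$ for $a\in V$ is: $\min\{|\lceil n/2\rceil-i|: a\in[x_i,\mathcal{T}(D)]\}$ if $a\in[x_1,\mathcal{T}(D)]$; $\min\{|\lceil n/2\rceil-i|: a\in[\mathcal{T}(D),x_i]\}$ if $a\in(\mathcal{T}(D),x_n]$; $\lceil n/2\rceil$ otherwise. The widened loss is $p_\alpha(D,\ell)=\min_{a\in V:|a-\ell|\le\alpha m}q(D,a)$.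 $\mathtt{DPExpMed}_\alpha(D)$ is the random point of $V$ with density proportional to $\exp(-\frac{\epsilon}{2}p_\alpha(D,\ell))$. *)

From mathcomp Require Import all_boot all_order all_algebra.
From mathcomp Require Import all_classical all_reals all_analysis.
Set Implicit Arguments. Unset Strict Implicit. Unset Printing Implicit Defensive.
Import Order.TTheory GRing.Theory Num.Theory.
Local Open Scope classical_set_scope.
Local Open Scope ring_scope.

(* A dataset D = (x_1,...,x_n) is represented by x : nat -> R together with n;
   only the values x 1, ..., x n are meaningful (1-based indexing as in the paper). *)

Section Defs.
Variable R : realType.

Definition Vset (m : R) : set R := [set l | - (m / 2) <= l <= m / 2].

Definition midx (n : nat) : nat := uphalf n.

Definition Tmed (x : nat -> R) (n : nat) : R := x (midx n).

(* FAIR(D, l) = max_{1<=i<=n} (|x_i - l| - |x_i - T(D)|).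
   The seed 0 is harmless: the term i = ceil(n/2) is >= 0. *)
Definition FAIR (x : nat -> R) (n : nat) (l : R) : R :=
  \big[Num.max/0]_(1 <= i < n.+1) (`|x i - l| - `|x i - Tmed x n|).

Definition sorted_data (x : nat -> R) (n : nat) : Prop :=
  forall i, (1 <= i)%N -> (i < n)%N -> x i <= x i.+1.

Definition data_in_V (m : R) (x : nat -> R) (n : nat) : Prop :=
  forall i, (1 <= i <= n)%N -> Vset m (x i).

Definition CTM (x : nat -> R) (n : nat) : Prop :=
  (forall i j, (1 <= i)%N -> (i < j)%N -> (j <= midx n - 1)%N ->
      `|x j.+1 - x j| <= `|x i.+1 - x i|) /\
  (forall i j, (midx n + 1 <= j)%N -> (j < i)%N -> (i <= n)%N ->
      `|x j - x j.-1| <= `|x i - x i.-1|).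

Definition distn (a b : nat) : nat := (a - b) + (b - a).

(* percentile loss q(D, a).  The minima are over nonempty finite sets of
   naturals bounded by ceil(n/2), so the seed ceil(n/2) does not alter them. *)
Definition qloss (x : nat -> R) (n : nat) (a : R) : nat :=
  if (x 1 <= a) && (a <= Tmed x n) then
    \big[minn/midx n]_(1 <= i < n.+1 | (x i <= a) && (a <= Tmed x n)) distn (midx n) i
  else if (Tmed x n < a) && (a <= x n) then
    \big[minn/midx n]_(1 <= i < n.+1 | (Tmed x n <= a) && (a <= x i)) distn (midx n) i
  else midx n.

(* widened loss p_alpha(D, l) = min_{a in V, |a - l| <= alpha m} q(D, a)
   (a minimum of naturals, written as an infimum in R). *)
Definition ploss (m alpha : R) (x : nat -> R) (n : nat) (l : R) : R :=
  inf [set ((qloss x n a)%:R : R) | a in [set a | Vset m a /\ `|a - l| <= alpha * m]].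

Definition expmed_weight (m eps alpha : R) (x : nat -> R) (n : nat) (l : R) : R :=
  expR (- (eps / 2) * ploss m alpha x n l).

(* Pr[DPExpMed_alpha(D) \in S] : density w.r.t. Lebesgue measure on V,
   proportional to exp(-eps/2 * p_alpha(D, l)). *)
Definition DPExpMed_prob (m eps alpha : R) (x : nat -> R) (n : nat) (S : set R) : R :=
  Rintegral lebesgue_measure (Vset m `&` S) (expmed_weight m eps alpha x n) /
  Rintegral lebesgue_measure (Vset m) (expmed_weight m eps alpha x n).

End Defs.

From mathcomp Require Import all_boot all_order all_algebra.
From mathcomp Require Import all_classical all_reals all_analysis.
From mathcomp Require Import measurable_realfun.
From mathcomp Require Import zify ring lra.
Set Implicit Arguments. Unset Strict Implicit. Unset Printing Implicit Defensive.
Import Order.TTheory GRing.Theory Num.Theory.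
Import numFieldNormedType.Exports.
Local Open Scope classical_set_scope.
Local Open Scope ring_scope.

(* Write n = 2h + 1, so that the median is T = x_(h+1).  In a CTM dataset the gaps
   shrink towards the median, so by the chord inequality for concave sequences a data
   point at distance d from T lies at least h d / m positions away from the median.
   Hence the percentile loss grows at rate at least h / m away from T, and the widened
   loss p_alpha vanishes within distance alpha m of T and grows linearly beyond it.
   The weight of DPExpMed is therefore 1 on a plateau of length alpha m and decays like
   exp (- c (|l - T| - alpha m)) with c = eps h / (2 m).  As FAIR (D, l) <= |l - T|,
   comparing the exponential tail beyond distance t with the plateau bounds the failure
   probability by 2 exp (c (alpha m - t)) / (c alpha m), which is at most beta for
   alpha = 1 / (n eps) and t = 24 m ln (1 / beta) / (n eps). *)

Section ConcaveChord.
Variables (R : realFieldType) (y : nat -> R) (k : nat).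
Hypothesis y_incr : forall i, (1 <= i)%N -> (i < k)%N -> y i <= y i.+1.
Hypothesis gap_noninc : forall i j, (1 <= i)%N -> (i < j)%N -> (j <= k - 1)%N ->
  y j.+1 - y j <= y i.+1 - y i.

Lemma chord_le_gap i : (1 <= i < k)%N -> y k - y i <= (k - i)%:R * (y i.+1 - y i).
Proof.
move=> /andP[i1 ik]; rewrite -(telescope_sumr y (ltnW ik)) mulr_natl -sumr_const_nat.
apply: ler_sum_nat => j /andP[ij jk].
have [<-|ji] := eqVneq i j; first by [].
by apply: gap_noninc; lia.
Qed.

Lemma gap_le_chord i : (1 <= i < k)%N -> (i - 1)%:R * (y i.+1 - y i) <= y i - y 1.
Proof.
move=> /andP[i1 ik]; rewrite -(telescope_sumr y i1) mulr_natl -sumr_const_nat.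
by apply: ler_sum_nat => j /andP[j1 ji]; apply: gap_noninc; lia.
Qed.

Lemma concave_chord i : (1 <= i <= k)%N ->
  (k - 1)%:R * (y k - y i) <= (k - i)%:R * (y k - y 1).
Proof.
move=> /andP[i1 ik]; have [->|ki] := eqVneq i k; first by rewrite subnn subrr mulr0 mul0r.
have ik' : (1 <= i < k)%N by lia.
have g0 : 0 <= y i.+1 - y i by rewrite subr_ge0 y_incr //; lia.
have up := chord_le_gap ik'; have low := gap_le_chord ik'.
have -> : (k - 1)%N = ((i - 1) + (k - i))%N by lia.
have -> : (k - i)%:R * (y k - y 1) = (k - i)%:R * (y i - y 1) + (k - i)%:R * (y k - y i).
  by ring.
rewrite natrD mulrDl lerD //.
apply: le_trans (ler_wpM2l (ler0n _ _) up) _.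
by rewrite mulrCA; apply: ler_wpM2l.
Qed.

End ConcaveChord.

Lemma midx_odd h : midx h.*2.+1 = h.+1.
Proof. by rewrite /midx /= doubleK. Qed.

Lemma sorted_data_le (R : realType) (x : nat -> R) n i j :
  sorted_data x n -> (1 <= i <= j)%N -> (j <= n)%N -> x i <= x j.
Proof.
move=> xs /andP[i1]; elim: j => [|j IH]; first by lia.
rewrite leq_eqVlt => /orP[/eqP <- //|ij] jn.
by apply: le_trans (IH ij (ltnW jn)) _; apply: xs; lia.
Qed.

Section CTMSpread.
Variables (R : realType) (m : R) (x : nat -> R) (h : nat).
Local Notation n := h.*2.+1.
Hypothesis xV : data_in_V m x n.
Hypothesis xs : sorted_data x n.
Hypothesis xC : CTM x n.

Lemma data_diff_le i j : (1 <= i <= n)%N -> (1 <= j <= n)%N -> x j - x i <= m.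
Proof. by move=> /xV /andP[? ?] /xV /andP[? ?]; lra. Qed.

Lemma CTM_left_spread i : (1 <= i <= h.+1)%N ->
  h%:R * (x h.+1 - x i) <= (h.+1 - i)%:R * m.
Proof.
move=> hi.
have incr j : (1 <= j)%N -> (j < h.+1)%N -> x j <= x j.+1 by move=> *; apply: xs; lia.
have gaps j k : (1 <= j)%N -> (j < k)%N -> (k <= h.+1 - 1)%N ->
    x k.+1 - x k <= x j.+1 - x j.
  move=> j1 jk kh; have := xC.1 j k j1 jk; rewrite midx_odd => /(_ kh).
  by rewrite !ger0_norm ?subr_ge0 //; apply: xs; lia.
have := concave_chord incr gaps hi; rewrite subn1 /= => /le_trans; apply.
apply: ler_wpM2l => //; apply: data_diff_le; lia.
Qed.

Lemma CTM_right_spread i : (h.+1 <= i <= n)%N ->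
  h%:R * (x i - x h.+1) <= (i - h.+1)%:R * m.
Proof.
(* Reflecting the data about the median turns the upper half into a lower half. *)
move=> hi; pose y j := - x (n.+1 - j).
have incr j : (1 <= j)%N -> (j < h.+1)%N -> y j <= y j.+1.
  by move=> *; rewrite lerN2; apply: (sorted_data_le xs); lia.
have gaps j k : (1 <= j)%N -> (j < k)%N -> (k <= h.+1 - 1)%N ->
    y k.+1 - y k <= y j.+1 - y j.
  move=> j1 jk kh; have := xC.2 (n.+1 - j)%N (n.+1 - k)%N; rewrite midx_odd.
  move=> /(_ ltac:(lia) ltac:(lia) ltac:(lia)).
  have [-> ->] : (n.+1 - j).-1 = (n.+1 - j.+1)%N /\ (n.+1 - k).-1 = (n.+1 - k.+1)%N.
    by split; lia.
  by rewrite !ger0_norm ?subr_ge0; [rewrite /y; lra| |]; apply: (sorted_data_le xs); lia.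
have := @concave_chord _ _ _ incr gaps (n.+1 - i) ltac:(lia); rewrite subn1 /= /y.
have [-> -> -> ->] : [/\ (n.+1 - h.+1 = h.+1)%N, (n.+1 - (n.+1 - i) = i)%N,
    (n.+1 - 1 = n)%N & (h.+1 - (n.+1 - i) = i - h.+1)%N] by split; lia.
rewrite !opprK !(addrC (- x _)) => /le_trans; apply.
apply: ler_wpM2l => //; apply: data_diff_le; lia.
Qed.

End CTMSpread.

Lemma bigmin_le (I : seq nat) (P : pred nat) (F : nat -> nat) s i :
  i \in I -> P i -> (\big[minn/s]_(j <- I | P j) F j <= F i)%N.
Proof.
elim: I => [//|j I IH]; rewrite inE big_cons => /orP[/eqP <-|iI] Pi.
  by rewrite Pi geq_minl.
by case: ifP => _; [rewrite geq_min IH ?orbT | exact: IH].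
Qed.

Lemma bigmin_le_seed (I : seq nat) (P : pred nat) (F : nat -> nat) s :
  (\big[minn/s]_(j <- I | P j) F j <= s)%N.
Proof.
elim: I => [|j I IH]; first by rewrite big_nil.
by rewrite big_cons; case: ifP => _ //; rewrite geq_min IH orbT.
Qed.

Section PercentileLoss.
Variables (R : realType) (x : nat -> R) (n : nat).
Local Notation T := (Tmed x n).
Local Notation k := (midx n).

Lemma qloss_ind (P : nat -> Prop) a :
  (forall u v, P u -> P v -> P (minn u v)) -> P k ->
  (forall i, (1 <= i <= n)%N -> x i <= a <= T -> P (distn k i)) ->
  (forall i, (1 <= i <= n)%N -> T < a <= x i -> P (distn k i)) ->
  P (qloss x n a).
Proof.
move=> Pmin Pk Pleft Pright; rewrite /qloss.
case: ifP => [_|_]; last case: ifP => [/andP[Ta _]|_] //.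
- rewrite big_nat_cond; apply: (big_ind P) => // i /andP[/andP[i1 i2] xia].
  by apply: Pleft => //; lia.
- rewrite big_nat_cond; apply: (big_ind P) => // i /andP[/andP[i1 i2] /andP[_ ai]].
  by apply: Pright; [lia | rewrite Ta].
Qed.

Lemma qloss_le_midx a : (qloss x n a <= k)%N.
Proof. by rewrite /qloss; case: ifP => _; [|case: ifP => _ //]; exact: bigmin_le_seed. Qed.

Lemma qloss_le_left a i : (1 <= i <= n)%N -> x 1 <= a <= T -> x i <= a ->
  (qloss x n a <= distn k i)%N.
Proof.
move=> hi ha xia; rewrite /qloss ha; apply: bigmin_le.
  by rewrite mem_index_iota; lia.
by rewrite xia; case/andP: ha.
Qed.

Lemma qloss_le_right a i : (1 <= i <= n)%N -> T < a <= x n -> a <= x i ->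
  (qloss x n a <= distn k i)%N.
Proof.
move=> hi /andP[Ta an] ai; rewrite /qloss Ta an (_ : (x 1 <= a) && (a <= T) = false).
  by apply: bigmin_le; [rewrite mem_index_iota; lia | rewrite ai ltW].
by apply/negbTE; rewrite negb_and -!ltNge Ta orbT.
Qed.

End PercentileLoss.

Lemma Tmed_odd (R : realType) (x : nat -> R) h : Tmed x h.*2.+1 = x h.+1.
Proof. by rewrite /Tmed midx_odd. Qed.

Section MedianLoss.
Variables (R : realType) (m : R) (x : nat -> R) (h : nat).
Local Notation n := h.*2.+1.
Local Notation T := (Tmed x n).
Hypothesis xV : data_in_V m x n.
Hypothesis xs : sorted_data x n.
Hypothesis xC : CTM x n.

Lemma Tmed_in_V : Vset m T.
Proof. by rewrite Tmed_odd; apply: xV; lia. Qed.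

Lemma data_le_Tmed i : (1 <= i <= h.+1)%N -> x i <= T.
Proof. by move=> hi; rewrite Tmed_odd; apply: (sorted_data_le xs); lia. Qed.

Lemma Tmed_le_data i : (h.+1 <= i <= n)%N -> T <= x i.
Proof. by move=> hi; rewrite Tmed_odd; apply: (sorted_data_le xs); lia. Qed.

Lemma qloss_Tmed : qloss x n T = 0%N.
Proof.
apply/eqP; rewrite -leqn0; apply: leq_trans (_ : distn (midx n) h.+1 <= 0)%N.
  apply: qloss_le_left; first by lia.
  - by rewrite lexx andbT; apply: data_le_Tmed.
  - by rewrite Tmed_odd.
by rewrite midx_odd /distn subnn.
Qed.

Lemma qloss_lower a : Vset m a -> h%:R * `|a - T| <= (qloss x n a)%:R * m.
Proof.
move=> /andP[a1 a2]; have /andP[T1 T2] := Tmed_in_V.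
have m0 : 0 <= m by lra.
apply: (qloss_ind (P := fun v : nat => h%:R * `|a - T| <= v%:R * m)).
- by move=> u v hu hv; case: leqP.
- rewrite midx_odd -natr1 mulrDl mul1r ler_wpDr // ler_wpM2l //.
  by rewrite ler_norml; apply/andP; split; lra.
- move=> i hi /andP[xia aT]; rewrite ler0_norm ?subr_le0 // opprB.
  have [ih|ih] := leqP i h.+1.
    rewrite midx_odd (_ : (distn _ _ = h.+1 - i)%N); last by rewrite /distn; lia.
    apply: le_trans (CTM_left_spread xV xs xC (i := i) _); last by lia.
    by rewrite Tmed_odd ler_wpM2l //; lra.
  have := Tmed_le_data (i := i) ltac:(lia).
  by move=> Txi; rewrite (_ : T - a = 0); [rewrite mulr0 mulr_ge0 | lra].
- move=> i hi /andP[Ta ai]; rewrite gtr0_norm ?subr_gt0 //.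
  have [ih|ih] := leqP i h.+1; first by have := data_le_Tmed (i := i) ltac:(lia); lra.
  rewrite midx_odd (_ : (distn _ _ = i - h.+1)%N); last by rewrite /distn; lia.
  apply: le_trans (CTM_right_spread xV xs xC (i := i) _); last by lia.
  by rewrite Tmed_odd ler_wpM2l //; lra.
Qed.

Lemma qloss_monoL a b : a <= b -> b <= T -> (qloss x n b <= qloss x n a)%N.
Proof.
move=> ab bT; apply: (qloss_ind (P := fun v => qloss x n b <= v)%N).
- by move=> u v hu hv; rewrite leq_min hu hv.
- exact: qloss_le_midx.
- move=> i hi /andP[xia aT]; apply: qloss_le_left => //; last by lra.
  by have := sorted_data_le xs (i := 1) (j := i) ltac:(lia) ltac:(lia); rewrite bT andbT; lra.
- by move=> i hi /andP[Ta _]; lra.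
Qed.

Lemma qloss_monoR a b : T <= b -> b <= a -> (qloss x n b <= qloss x n a)%N.
Proof.
rewrite le_eqVlt => /orP[/eqP <-|Tb] ba; first by rewrite qloss_Tmed.
apply: (qloss_ind (P := fun v => qloss x n b <= v)%N).
- by move=> u v hu hv; rewrite leq_min hu hv.
- exact: qloss_le_midx.
- by move=> i hi /andP[_ aT]; lra.
- move=> i hi /andP[Ta ai]; apply: qloss_le_right => //; last by lra.
  by have := sorted_data_le xs (i := i) (j := n) ltac:(lia) ltac:(lia); rewrite Tb; lra.
Qed.

End MedianLoss.

Section WidenedLoss.
Variables (R : realType) (m alpha : R) (x : nat -> R) (n : nat).
Hypothesis radius_ge0 : 0 <= alpha * m.
Local Notation p := (ploss m alpha x n).

Lemma ploss_le_qloss l a : Vset m a -> `|a - l| <= alpha * m -> p l <= (qloss x n a)%:R.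
Proof.
move=> Va al; apply: ge_inf; last by exists a.
by exists 0 => _ [b _ <-]; rewrite ler0n.
Qed.

Lemma ploss_ge l z : Vset m l ->
  (forall a, Vset m a -> `|a - l| <= alpha * m -> z <= (qloss x n a)%:R) -> z <= p l.
Proof.
move=> Vl zq; apply: lb_le_inf.
  by exists (qloss x n l)%:R, l => //; split; rewrite // subrr normr0.
by move=> _ [a [Va al] <-]; apply: zq.
Qed.

Lemma ploss_ge0 l : Vset m l -> 0 <= p l.
Proof. by move=> Vl; apply: ploss_ge => // a _ _; rewrite ler0n. Qed.

End WidenedLoss.

Section MedianWidenedLoss.
Variables (R : realType) (m alpha : R) (x : nat -> R) (h : nat).
Local Notation n := h.*2.+1.
Local Notation T := (Tmed x n).
Local Notation p := (ploss m alpha x n).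
Hypothesis xV : data_in_V m x n.
Hypothesis xs : sorted_data x n.
Hypothesis xC : CTM x n.
Hypothesis m_gt0 : 0 < m.
Hypothesis alpha_ge0 : 0 <= alpha.

Let radius_ge0 : 0 <= alpha * m. Proof. by rewrite mulr_ge0 // ltW. Qed.

Lemma ploss_eq0 l : Vset m l -> `|T - l| <= alpha * m -> p l = 0.
Proof.
move=> Vl Tl; apply/eqP; rewrite eq_le ploss_ge0 // andbT.
by have := ploss_le_qloss x n (Tmed_in_V xV) Tl; rewrite (qloss_Tmed xs).
Qed.

Lemma ploss_lower l : Vset m l -> h%:R * (`|l - T| - alpha * m) / m <= p l.
Proof.
move=> Vl; apply: ploss_ge => // a Va al.
rewrite ler_pdivrMr //; apply: le_trans (qloss_lower xV xs xC Va).
apply: ler_wpM2l => //; have := ler_distD a l T; rewrite (distrC l a); lra.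
Qed.

Lemma ploss_monoL l1 l2 : Vset m l1 -> l1 <= l2 -> l2 <= T -> p l2 <= p l1.
Proof.
move=> Vl1 l12 l2T; apply: ploss_ge => // a /[dup] Va /andP[a1 a2] al.
have /andP[T1 T2] := Tmed_in_V xV.
have [aT|Ta] := lerP (a + (l2 - l1)) T.
  apply: le_trans (_ : p l2 <= (qloss x n (a + (l2 - l1)))%:R) _.
    apply: ploss_le_qloss; first by apply/andP; split; lra.
    by rewrite (_ : a + (l2 - l1) - l2 = a - l1) //; ring.
  by rewrite ler_nat; apply: (qloss_monoL xs); lra.
apply: le_trans (_ : p l2 <= (qloss x n T)%:R) _.
  apply: ploss_le_qloss; first exact: Tmed_in_V.
  by rewrite ger0_norm; have := ler_norm (a - l1); lra.
by rewrite (qloss_Tmed xs).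
Qed.

Lemma ploss_monoR l1 l2 : Vset m l2 -> l1 <= l2 -> T <= l1 -> p l1 <= p l2.
Proof.
move=> Vl2 l12 Tl1; apply: ploss_ge => // a /[dup] Va /andP[a1 a2] al.
have /andP[T1 T2] := Tmed_in_V xV.
have [Ta|aT] := lerP T (a - (l2 - l1)).
  apply: le_trans (_ : p l1 <= (qloss x n (a - (l2 - l1)))%:R) _.
    apply: ploss_le_qloss; first by apply/andP; split; lra.
    by rewrite (_ : a - (l2 - l1) - l1 = a - l2) //; ring.
  by rewrite ler_nat; apply: (qloss_monoR xs); lra.
apply: le_trans (_ : p l1 <= (qloss x n T)%:R) _.
  apply: ploss_le_qloss; first exact: Tmed_in_V.
  by rewrite ler0_norm; have := ler_norm (l2 - a); rewrite distrC; lra.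
by rewrite (qloss_Tmed xs).
Qed.

End MedianWidenedLoss.

Section RealAnalysis.
Variable R : realType.
Local Notation mu := (@lebesgue_measure R).

Lemma measurable_bigmaxr (I : seq nat) (F : nat -> R -> R) :
  (forall i, measurable_fun setT (F i)) ->
  measurable_fun setT (fun l => \big[Num.max/0]_(i <- I) F i l).
Proof.
move=> mF; elim: I => [|i I IH].
  by under eq_fun do rewrite big_nil; exact: measurable_cst.
under eq_fun do rewrite big_cons; exact: measurable_maxr.
Qed.

Lemma nondecreasing_itv_measurable (a b : R) (f : R -> R) : a <= b ->
  {in `[a, b] &, {homo f : u v / u <= v}} -> measurable_fun `[a, b] f.
Proof.
move=> ab f_nd; pose clamp l := Num.max a (Num.min l b).
have clamp_itv l : clamp l \in `[a, b].
  by rewrite in_itv /= /clamp le_max lexx ge_max ab ge_min lexx orbT.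
apply: (eq_measurable_fun (f \o clamp)).
  by move=> l; rewrite inE /= in_itv /= => /andP[al lb]; rewrite /clamp (min_idPl lb) (max_idPr al).
apply: nondecreasing_measurable => // l1 l2 l12; apply: f_nd => //.
by rewrite /clamp le_max2 ?le_min2.
Qed.

Lemma nonincreasing_itv_measurable (a b : R) (f : R -> R) : a <= b ->
  {in `[a, b] &, {homo f : u v /~ u <= v}} -> measurable_fun `[a, b] f.
Proof.
move=> ab f_ni; rewrite -(opprK f); apply/measurable_funN.
by apply: nondecreasing_itv_measurable => // u v uI vI uv; rewrite /= lerN2 f_ni.
Qed.

Lemma integral_expR_affine (k z a b : R) : k != 0 -> a < b ->
  (\int[mu]_(l in `[a, b]) (expR (k * (l - z)))%:E =
   ((expR (k * (b - z)) - expR (k * (a - z))) / k)%:E)%E.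
Proof.
move=> k0 ab; pose F l := expR (k * (l - z)) / k.
have cf : continuous (fun l : R => expR (k * (l - z))).
  move=> l; apply: continuous_comp; last exact: continuous_expR.
  apply: (@continuousM _ R^o (fun=> k)); first exact: cst_continuous.
  by apply: continuousB => //; exact: cst_continuous.
have dF l : is_derive (l : R^o) (1 : R^o) F (expR (k * (l - z))).
  apply: is_derive_eq; rewrite scaler0 add0r subr0 /GRing.scale /= mulr1.
  by field.
have cF : continuous F.
  move=> l; apply: (@continuousM _ R^o (fun l => expR (k * (l - z))) (fun=> k^-1)).
    exact: cf.
  exact: cst_continuous.
have -> : ((expR (k * (b - z)) - expR (k * (a - z))) / k)%:E = ((F b)%:E - (F a)%:E)%E.
  by rewrite -EFinB /F mulrBl.
apply: continuous_FTC2 ab _ _ _.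
- exact: continuous_subspaceT.
- split; first by move=> l _; case: (dF l).
  + by apply: cvg_at_right_filter; exact: cF.
  + by apply: cvg_at_left_filter; exact: cF.
- by move=> l _; rewrite derive1E; case: (dF l).
Qed.

Lemma integral_le_expR_dist_tail (T c s t r : R) (D : set R) (f : R -> R) :
  0 < c -> 0 < t -> 0 < r -> measurable D -> measurable_fun D f ->
  (forall l, D l -> 0 <= f l <= expR (c * (s - `|l - T|))) ->
  D `<=` [set l | t < `|l - T| <= t + r] ->
  (\int[mu]_(l in D) (f l)%:E <= (2 * expR (c * (s - t)) / c)%:E)%E.
Proof.
move=> c0 t0 r0 mD mf f_dom Dtail; pose g l := expR (c * (s - `|l - T|)).
have mg D' : measurable_fun D' (EFin \o g).
  apply/measurable_EFinP/measurable_funTS/measurableT_comp; first exact: measurable_expR.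
  apply: measurable_funM => //; apply: measurable_funB => //.
  by apply: measurableT_comp => //; exact: measurable_funB.
have g0 (D' : set R) : forall l, D' l -> (0 <= (g l)%:E)%E.
  by move=> l _; rewrite lee_fin expR_ge0.
apply: (@le_trans _ _ (\int[mu]_(l in D) (g l)%:E)%E).
  apply: ge0_le_integral => //.
  - by move=> l Dl; have /andP[f0 _] := f_dom l Dl; rewrite lee_fin.
  - exact/measurable_EFinP.
  - exact: mg.
  - by move=> l Dl; have /andP[_ fg] := f_dom l Dl; rewrite lee_fin.
set Rt := `[T + t, T + t + r]%classic; set Lt := `[T - t - r, T - t]%classic.
have right : (\int[mu]_(l in Rt) (g l)%:E <= (expR (c * (s - t)) / c)%:E)%E.
  have -> : (\int[mu]_(l in Rt) (g l)%:E = \int[mu]_(l in Rt) (expR (- c * (l - (T + s))))%:E)%E.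
    apply: eq_integral => l; rewrite inE /Rt /= in_itv /= => /andP[l1 _].
    by rewrite /g ger0_norm; [congr (expR _)%:E; ring | lra].
  rewrite integral_expR_affine; [|by rewrite oppr_eq0 gt_eqF|lra].
  rewrite (_ : - c * (T + t - (T + s)) = c * (s - t)); last by ring.
  rewrite lee_fin invrN mulrN -mulNr opprB ler_pM2r ?invr_gt0 //.
  by rewrite gerBl expR_ge0.
have left : (\int[mu]_(l in Lt) (g l)%:E <= (expR (c * (s - t)) / c)%:E)%E.
  have -> : (\int[mu]_(l in Lt) (g l)%:E = \int[mu]_(l in Lt) (expR (c * (l - (T - s))))%:E)%E.
    apply: eq_integral => l; rewrite inE /Lt /= in_itv /= => /andP[_ l2].
    by rewrite /g ltr0_norm; [congr (expR _)%:E; ring | lra].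
  rewrite integral_expR_affine; [|by rewrite gt_eqF|lra].
  rewrite (_ : c * (T - t - (T - s)) = c * (s - t)); last by ring.
  by rewrite lee_fin ler_pM2r ?invr_gt0 // gerBl expR_ge0.
have mRt : measurable Rt by exact: measurable_itv.
have mLt : measurable Lt by exact: measurable_itv.
apply: (@le_trans _ _ (\int[mu]_(l in Rt `|` Lt) (g l)%:E)%E).
  apply: ge0_subset_integral => //; [exact: measurableU | exact: mg | exact: g0 |].
  move=> l Dl; have /andP[tl lr] := Dtail l Dl; rewrite /Rt /Lt /= !in_itv /=.
  have [Tl|lT] := lerP T l.
    by move: tl lr; rewrite ger0_norm ?subr_ge0 // => tl lr; left; apply/andP; split; lra.
  by move: tl lr; rewrite ltr0_norm ?subr_lt0 // => tl lr; right; apply/andP; split; lra.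
rewrite ge0_integral_setU //; [|exact: mg|exact: g0|]; last first.
  apply/disj_setPS => l [lR lL]; move: lR lL.
  by rewrite /Rt /Lt /= !in_itv /= => /andP[? ?] /andP[? ?]; lra.
by rewrite (_ : 2 * _ / c = expR (c * (s - t)) / c + expR (c * (s - t)) / c) ?EFinD ?leeD //; ring.
Qed.

End RealAnalysis.

Section ExpMechanismTail.
Variables (R : realType) (V S : set R) (w : R -> R) (T r c s t : R).
Local Notation mu := (@lebesgue_measure R).
Hypotheses (mV : measurable V) (mS : measurable S) (mw : measurable_fun V w).
Hypothesis w_ge0 : forall l, 0 <= w l.
Hypothesis w_le1 : forall l, V l -> w l <= 1.
Hypothesis V_sub : V `<=` `[T - r, T + r].
Hypothesis w_peak : exists a, `[a, a + s] `<=` [set l | V l /\ w l = 1].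
Hypothesis w_tail : forall l, V l -> w l <= expR (c * (s - `|l - T|)).
Hypothesis S_tail : forall l, V l -> ~ S l -> t < `|l - T|.

Let I D := (\int[mu]_(l in D) (w l)%:E)%E.

Let I_ge0 D : (0 <= I D)%E.
Proof. by apply: integral_ge0 => l _; rewrite lee_fin. Qed.

Let mwE : measurable_fun V (EFin \o w).
Proof. exact/measurable_EFinP. Qed.

Lemma integral_weight_fin_num : I V \is a fin_num.
Proof.
rewrite ge0_fin_numE //; apply: (@le_lt_trans _ _ (mu `[T - r, T + r])); last first.
  by rewrite lebesgue_measure_itv /=; case: ifP => _; [rewrite -EFinD |]; exact: ltry.
apply: (@le_trans _ _ (mu V)); last first.
  by apply: le_measure; rewrite ?inE //; exact: measurable_itv.
rewrite -[leRHS]mul1e -integral_cst //; apply: ge0_le_integral => //.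
- by move=> l _; rewrite lee_fin.
Qed.

Lemma integral_weight_ge_peak : 0 < s -> (s%:E <= I V)%E.
Proof.
move=> s_gt0; have [a peak] := w_peak; set J := `[a, a + s]%classic.
have mJ : measurable J by exact: measurable_itv.
have JV : (\int[mu]_(l in J) (w l)%:E <= I V)%E.
  apply: ge0_subset_integral => //; first by move=> l _; rewrite lee_fin.
  by move=> l /peak [].
have Js : (\int[mu]_(l in J) (w l)%:E)%E = s%:E.
  rewrite (eq_integral (cst 1%:E)); last by move=> l; rewrite inE => /peak [_ ->].
  rewrite integral_cst // mul1e /J; apply: eq_trans (lebesgue_measure_itv _) _.
  by rewrite /= lte_fin ltrDl s_gt0 -EFinD addrAC subrr add0r.
by rewrite -Js.
Qed.

Lemma integral_weight_tail : 0 < c -> 0 < t -> 0 < r ->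
  (I (V `&` ~` S) <= (2 * expR (c * (s - t)) / c)%:E)%E.
Proof.
move=> c_gt0 t_gt0 r_gt0; apply: (@integral_le_expR_dist_tail _ T c s t r) => //.
- by apply: measurableI => //; exact: measurableC.
- by apply: measurable_funS mw => //; exact: subIsetl.
- by move=> l [Vl _]; rewrite w_ge0; exact: w_tail.
- move=> l [Vl nSl]; rewrite /= S_tail //=.
  apply: le_trans (_ : `|l - T| <= r) _; last by rewrite lerDr ltW.
  by rewrite ler_distl; have := V_sub Vl; rewrite /= in_itv.
Qed.

Theorem weight_fraction_ge : 0 < c -> 0 < s -> 0 < t -> 0 < r ->
  1 - 2 * expR (c * (s - t)) / (c * s) <= fine (I (V `&` S)) / fine (I V).
Proof.
move=> c_gt0 s_gt0 t_gt0 r_gt0.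
have mVS : measurable (V `&` S) by exact: measurableI.
have mVnS : measurable (V `&` ~` S) by apply: measurableI => //; exact: measurableC.
have eV : V = (V `&` S) `|` (V `&` ~` S) by rewrite -setIUr setUv setIT.
have split : I V = (I (V `&` S) + I (V `&` ~` S))%E.
  rewrite /I {1}eV ge0_integral_setU //; rewrite -?eV //.
  - by move=> l _; rewrite lee_fin.
  - by apply/disj_setPS => l [[_ Sl] [_ nSl]].
have finV := integral_weight_fin_num.
have [finS finN] : I (V `&` S) \is a fin_num /\ I (V `&` ~` S) \is a fin_num.
  by move: finV; rewrite split fin_numD => /andP.
set G := fine (I (V `&` S)); set N := fine (I (V `&` ~` S)).
have eS : I (V `&` S) = G%:E by rewrite /G fineK.
have eN : I (V `&` ~` S) = N%:E by rewrite /N fineK.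
have Nle : N <= 2 * expR (c * (s - t)) / c.
  by rewrite -lee_fin -eN; exact: integral_weight_tail.
have sle : s <= G + N.
  by rewrite -lee_fin EFinD -eS -eN -split; exact: integral_weight_ge_peak.
rewrite split eS eN -EFinD /=.
have G0 : 0 <= G by rewrite fine_ge0.
have E0 : 0 <= 2 * expR (c * (s - t)) by rewrite mulr_ge0 ?expR_ge0.
rewrite ler_pdivlMr; last lra.
have -> : 2 * expR (c * (s - t)) / (c * s) = 2 * expR (c * (s - t)) / c / s.
  by rewrite invfM mulrA.
set q := 2 * expR (c * (s - t)) / c / s.
have Nq : N <= q * s by rewrite /q divfK ?gt_eqF.
have q0 : 0 <= q by rewrite /q !divr_ge0 // ltW.
nra.
Qed.

End ExpMechanismTail.

Lemma FAIR_le_dist_Tmed (R : realType) (x : nat -> R) n l : FAIR x n l <= `|l - Tmed x n|.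
Proof.
rewrite /FAIR; apply: (big_ind (fun v => v <= `|l - Tmed x n|)) => //.
  by move=> u v hu hv; rewrite ge_max hu hv.
by move=> i _; have := ler_distD (Tmed x n) (x i) l; rewrite (distrC (Tmed x n) l); lra.
Qed.

Lemma measurable_FAIR (R : realType) (x : nat -> R) n : measurable_fun setT (FAIR x n).
Proof.
apply: measurable_bigmaxr => i; apply: measurable_funB => //.
by apply: measurableT_comp => //; exact: measurable_funB.
Qed.

Lemma Vset_itv (R : realType) (m : R) : Vset m = `[- (m / 2), m / 2]%classic.
Proof. by apply/seteqP; split => l /=; rewrite in_itv. Qed.

Definition expmed_rate (R : realType) (m eps : R) (h : nat) : R := eps * h%:R / (2 * m).

Section ExpMedWeight.
Variables (R : realType) (m eps alpha : R) (x : nat -> R) (h : nat).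
Local Notation n := h.*2.+1.
Local Notation T := (Tmed x n).
Local Notation p := (ploss m alpha x n).
Local Notation w := (expmed_weight m eps alpha x n).
Hypothesis xV : data_in_V m x n.
Hypothesis xs : sorted_data x n.
Hypothesis xC : CTM x n.
Hypothesis m_gt0 : 0 < m.
Hypothesis eps_ge0 : 0 <= eps.
Hypothesis alpha_ge0 : 0 <= alpha.

Lemma expmed_weight_le l1 l2 : p l2 <= p l1 -> w l1 <= w l2.
Proof.
move=> p21; rewrite /expmed_weight ler_expR !mulNr lerN2.
by apply: ler_wpM2l => //; exact: divr_ge0.
Qed.

Lemma expmed_weight_le1 l : Vset m l -> w l <= 1.
Proof.
move=> Vl; rewrite /expmed_weight expR_le1 mulNr oppr_le0 mulr_ge0 ?divr_ge0 //.
by apply: ploss_ge0 => //; rewrite mulr_ge0 // ltW.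
Qed.

Lemma expmed_weight_eq1 l : Vset m l -> `|T - l| <= alpha * m -> w l = 1.
Proof. by move=> Vl Tl; rewrite /expmed_weight (ploss_eq0 xV xs) // mulr0 expR0. Qed.

Lemma expmed_weight_plateau : alpha * m <= m / 2 ->
  exists a, `[a, a + alpha * m] `<=` [set l | Vset m l /\ w l = 1].
Proof.
move=> am; have /andP[T1 T2] := Tmed_in_V xV.
(* the plateau lies on the side of T facing the centre of V *)
exists (if T <= 0 then T else T - alpha * m) => l; rewrite /= in_itv /=.
case: ifP => T0 /andP[l1 l2]; (split; [apply/andP; split; lra | apply: expmed_weight_eq1]).
all: by [apply/andP; split; lra | rewrite ler_norml; apply/andP; split; lra].
Qed.

Lemma expmed_weight_tail l : Vset m l ->
  w l <= expR (expmed_rate m eps h * (alpha * m - `|l - T|)).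
Proof.
move=> Vl.
have -> : expmed_rate m eps h * (alpha * m - `|l - T|) =
    - (eps / 2 * (h%:R * (`|l - T| - alpha * m) / m)).
  by rewrite /expmed_rate; field; rewrite gt_eqF.
by rewrite ler_expR mulNr lerN2 ler_wpM2l ?divr_ge0 // (ploss_lower xV xs xC).
Qed.

Lemma measurable_expmed_weight : measurable_fun (Vset m) w.
Proof.
have /andP[T1 T2] := Tmed_in_V xV.
have -> : Vset m = `[- (m / 2), T]%classic `|` `[T, m / 2]%classic.
  apply/seteqP; split => l /=; rewrite /Vset /= !in_itv /=.
    by move=> /andP[l1 l2]; case: (lerP l T) => lT; [left|right]; apply/andP; split; lra.
  by case=> /andP[l1 l2]; apply/andP; split; lra.
apply/measurable_funU => //; split.
- apply: nondecreasing_itv_measurable => // l1 l2.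
  rewrite !in_itv /= => /andP[l1_lo l1_hi] /andP[l2_lo l2_hi] l12.
  by apply: expmed_weight_le; apply: (ploss_monoL xV xs) => //; apply/andP; split; lra.
- apply: nonincreasing_itv_measurable => // l1 l2.
  rewrite !in_itv /= => /andP[l1_lo l1_hi] /andP[l2_lo l2_hi] l12.
  by apply: expmed_weight_le; apply: (ploss_monoR xV xs) => //; apply/andP; split; lra.
Qed.

End ExpMedWeight.

Theorem DPExpMed_FAIR_tail (R : realType) (m eps alpha t : R) (x : nat -> R) (h : nat) :
  data_in_V m x h.*2.+1 -> sorted_data x h.*2.+1 -> CTM x h.*2.+1 ->
  0 < m -> 0 < eps -> (0 < h)%N -> 0 < alpha -> 2 * alpha <= 1 -> 0 < t ->
  1 - 2 * expR (expmed_rate m eps h * (alpha * m - t)) / (expmed_rate m eps h * (alpha * m))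
  <= DPExpMed_prob m eps alpha x h.*2.+1 [set l | FAIR x h.*2.+1 l <= t].
Proof.
move=> xV xs xC m_gt0 eps_gt0 h_gt0 alpha_gt0 alpha_le t_gt0.
have eps_ge0 := ltW eps_gt0; have alpha_ge0 := ltW alpha_gt0.
have /andP[T1 T2] := Tmed_in_V xV.
apply: (@weight_fraction_ge _ _ _ _ (Tmed x h.*2.+1) m (expmed_rate m eps h) (alpha * m)) => //.
- by rewrite Vset_itv; exact: measurable_itv.
- rewrite -[X in measurable X]setTI.
  have -> : [set l | FAIR x h.*2.+1 l <= t] = FAIR x h.*2.+1 @^-1` `]-oo, t].
    by apply/seteqP; split => l; rewrite /= in_itv.
  exact: measurable_FAIR.
- exact: measurable_expmed_weight.
- by move=> l; exact: expR_ge0.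
- exact: expmed_weight_le1.
- by move=> l /andP[l1 l2]; rewrite /= in_itv /=; apply/andP; split; lra.
- by apply: expmed_weight_plateau => //; nra.
- exact: expmed_weight_tail.
- move=> l _ nSl; apply: lt_le_trans (FAIR_le_dist_Tmed x _ l); rewrite ltNge; exact/negP.
- by rewrite /expmed_rate divr_gt0 ?mulr_gt0 ?ltr0n.
- by rewrite mulr_gt0.
Qed.


Lemma ln_inv_gt_two_thirds (R : realType) (beta : R) : 0 < beta < 1 / 3 -> 2 / 3 < ln (1 / beta).
Proof.
move=> /andP[b0 b3]; have := expR_ge1Dx (- ln (1 / beta)).
rewrite expRN lnK ?posrE ?divr_gt0 // div1r invrK; lra.
Qed.

Lemma expR_tail_le (R : realType) (u beta : R) : 1 / 6 <= u <= 1 / 4 -> 0 < beta < 1 / 3 ->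
  2 * expR (u - 24 * u * ln (1 / beta)) / u <= beta.
Proof.
move=> /andP[u6 u4] hb; have /andP[b0 b3] := hb; have L23 := ln_inv_gt_two_thirds hb.
set L := ln (1 / beta) in L23 *.
have eL : expR (- L) = beta by rewrite expRN lnK ?posrE ?divr_gt0 // div1r invrK.
have eL4 : expR (- (4 * L)) = beta ^+ 4 by rewrite -mulrN expRM_natl eL.
have e4 : expR (1 / 4) <= 4 / 3 :> R.
  have := expR_ge1Dx (- (1 / 4) : R); have := expR_gt0 (1 / 4 : R).
  have : expR (1 / 4) * expR (- (1 / 4)) = 1 :> R by rewrite -expRD subrr expR0.
  nra.
have eu : expR (u - 24 * u * L) <= 4 / 3 * beta ^+ 4.
  rewrite expRD -eL4; apply: ler_pM; rewrite ?expR_ge0 //.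
    by apply: le_trans e4; rewrite ler_expR.
  by rewrite ler_expR; nra.
have b4 : 16 * beta ^+ 4 <= beta.
  have : (3 * beta) ^+ 3 <= 1 by apply: exprn_ile1; lra.
  by rewrite exprMn (_ : 3 ^+ 3 = 27) //; rewrite !exprS expr0 mulr1; nra.
rewrite ler_pdivrMr; last lra.
have : 0 <= beta ^+ 4 by rewrite exprn_ge0 // ltW.
nra.
Qed.

Lemma expmed_rate_radius_bounds (R : realType) (m eps : R) h :
  0 < m -> 0 < eps -> (0 < h)%N ->
  1 / 6 <= expmed_rate m eps h * (1 / ((h.*2.+1)%:R * eps) * m) <= 1 / 4.
Proof.
move=> m0 e0 h0; have h1 : 1 <= h%:R :> R by rewrite ler1n.
have -> : expmed_rate m eps h * (1 / ((h.*2.+1)%:R * eps) * m) = h%:R / (4 * h%:R + 2).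
  have -> : (h.*2.+1)%:R = 2 * h%:R + 1 :> R.
    by rewrite -[in LHS]addn1 -muln2 natrD natrM mulrC.
  rewrite /expmed_rate.
  by field; apply/and3P; split; rewrite ?gt_eqF //; lra.
by apply/andP; split; [rewrite ler_pdivlMr | rewrite ler_pdivrMr]; lra.
Qed.

Theorem theorem7p12 (R : realType) :
  exists C C' : R, 0 < C /\ 0 < C' /\
  forall (m beta eps : R) (n : nat) (x : nat -> R),
    0 < m -> 0 < beta < 1 / 3 -> 0 < eps < 1 -> odd n ->
    C * ln (1 / beta) <= n%:R * eps ->
    data_in_V m x n -> sorted_data x n -> CTM x n ->
    let alpha := 1 / (n%:R * eps) in
    1 - beta <=
      DPExpMed_prob m eps alpha x n
        [set l | FAIR x n l <= C' * (m / (n%:R * eps)) * ln (1 / beta)].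
Proof.
(* C = 3 forces n eps > 2, hence h >= 1 and alpha <= 1/2; with c alpha m >= 1/6,
   C' = 24 makes the decay exponent c t at least 4 ln (1 / beta). *)
exists 3, 24; do 2 split => //.
move=> m beta eps n x m0 hb /andP[e0 e1] nodd hC xV xs xC; cbv zeta.
have [h nE] : exists h, n = h.*2.+1.
  by exists n./2; rewrite -[n in LHS]odd_double_half nodd add1n.
subst n; set N := (h.*2.+1)%:R * eps in hC *; set L := ln (1 / beta) in hC *.
have L23 : 2 / 3 < L := ln_inv_gt_two_thirds hb.
have N2 : 2 < N by lra.
have h_gt0 : (0 < h)%N.
  by rewrite lt0n; apply/negP => /eqP h0; move: N2; rewrite /N h0 /= mul1r; lra.
have t_gt0 : 0 < 24 * (m / N) * L by rewrite !mulr_gt0 ?invr_gt0 //; lra.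
have alpha_gt0 : 0 < 1 / N by rewrite divr_gt0 //; lra.
have alpha_le : 2 * (1 / N) <= 1 by rewrite mulrA mulr1 ler_pdivrMr; lra.
have := DPExpMed_FAIR_tail xV xs xC m0 e0 h_gt0 alpha_gt0 alpha_le t_gt0.
have := expmed_rate_radius_bounds m0 e0 h_gt0; rewrite -/N.
set u := expmed_rate m eps h * (1 / N * m) => u_bounds.
have -> : expmed_rate m eps h * (1 / N * m - 24 * (m / N) * L) = u - 24 * u * L.
  by rewrite /u; ring.
by apply: le_trans; rewrite lerD2l lerN2 expR_tail_le.
Qed.
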